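(* Let $I$ be a nonempty open real interval and let $P(u)=\alpha+\beta u+\gamma u^2$ ($\alpha,\beta,\gamma\in\mathbb{R}$) be a polynomial of degree at most two which is positive on $I$. Let $D_P:=\beta^2-4\alpha\gamma$ be its discriminant and let $t\in\,]0,1[\,$ satisfy $(t-\frac12)D_P=0$. Let $\psi$ be a primitive function of $1/P$ on $I$ and let $\ell:=1/\sqrt{P}$. Then the functions $\varphi:=\psi^{-1}$ and $f:=\ell\circ\varphi$, defined on the interval $\psi(I)$, satisfy \[ \big(tf(x)+(1-t)f(y)\big)\varphi(tx+(1-t)y)=tf(x)\varphi(x)+(1-t)f(y)\varphi(y) \qquad\text{for all } x,y\in \psi(I). \] *)

From Stdlib Require Import Reals.
From Coquelicot Require Import Coquelicot.
Open Scope R_scope.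

Definition in_open_int (a b : Rbar) (u : R) : Prop := Rbar_lt a u /\ Rbar_lt u b.

Definition Pquad (al be ga : R) (u : R) : R := al + be * u + ga * u ^ 2.

Definition discP (al be ga : R) : R := be ^ 2 - 4 * al * ga.

Definition ellP (al be ga : R) (u : R) : R := / sqrt (Pquad al be ga u).

From Stdlib Require Import Reals Lra Psatz.
From Coquelicot Require Import Coquelicot.
Open Scope R_scope.

(* Write u = phi x, v = phi y: the claim says that phi (t x + (1 - t) y) is the
   mean of u and v with weights t ell(u) and (1 - t) ell(v).  Fix v and let M w
   be this weighted mean of w and v.  A direct computation shows that
   M'(w) P(w) - t P(M w) is a multiple of (t - 1/2) (1 - ell(w) ell(v) B(w, v)),
   where B is the polar form of P.  If D_P = 0 then B(w, v)^2 = P(w) P(v), and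
   B(w, v) > 0 on I because B(., v) is affine, positive at v and nonzero on I;
   so the factor vanishes.  Hence psi (M w) - t psi w has zero derivative on I,
   and its value at w = v is (1 - t) psi v. *)

Definition wmean (p q z v : R) : R := (p * z + q * v) / (p + q).

Lemma wmean_between (p q z v : R) :
  0 <= p -> 0 <= q -> 0 < p + q -> Rmin z v <= wmean p q z v <= Rmax z v.
Proof.
intros Hp Hq Hpq; unfold wmean.
assert (Hmin := Rmin_l z v); assert (Hmin' := Rmin_r z v).
assert (Hmax := Rmax_l z v); assert (Hmax' := Rmax_r z v).
split.
- apply Rmult_le_reg_r with (p + q); [lra|].
  field_simplify; [nra | lra].
- apply Rmult_le_reg_r with (p + q); [lra|].
  field_simplify; [nra | lra].
Qed.

Lemma in_open_int_between (a b : Rbar) (z v w : R) :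
  in_open_int a b z -> in_open_int a b v -> Rmin z v <= w <= Rmax z v ->
  in_open_int a b w.
Proof.
intros [Haz Hzb] [Hav Hvb] [Hmin Hmax]; split.
- apply Rbar_lt_le_trans with (Rmin z v); [now apply Rmin_case | exact Hmin].
- apply Rbar_le_lt_trans with (Rmax z v); [exact Hmax | now apply Rmax_case].
Qed.

Lemma in_open_int_wmean (a b : Rbar) (p q z v : R) :
  in_open_int a b z -> in_open_int a b v -> 0 <= p -> 0 <= q -> 0 < p + q ->
  in_open_int a b (wmean p q z v).
Proof.
intros Hz Hv Hp Hq Hpq.
exact (in_open_int_between a b z v _ Hz Hv (wmean_between p q z v Hp Hq Hpq)).
Qed.

Lemma primitive_unique (a b : Rbar) (F G h : R -> R) (z v : R) :
  (forall u, in_open_int a b u -> is_derive F u (h u)) ->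
  (forall u, in_open_int a b u -> is_derive G u (h u)) ->
  in_open_int a b z -> in_open_int a b v ->
  F z - G z = F v - G v.
Proof.
intros HF HG Hz Hv.
set (H := fun u => F u - G u).
assert (HH : forall u, in_open_int a b u -> is_derive H u 0).
{ intros u Hu.
  replace 0 with (minus (h u) (h u)) by (unfold minus, plus, opp; simpl; ring).
  exact (is_derive_minus F G u _ _ (HF u Hu) (HG u Hu)). }
assert (Hseg : forall u, Rmin v z <= u <= Rmax v z -> in_open_int a b u)
  by (intros u Hu; exact (in_open_int_between a b v z u Hv Hz Hu)).
destruct (MVT_gen H v z (fun _ => 0)) as [c [_ Hc]].
- intros u Hu; apply HH, Hseg; lra.
- intros u Hu; apply continuity_pt_filterlim.
  apply (ex_derive_continuous (K := R_AbsRing) (V := R_NormedModule) H u).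
  exists 0; apply HH, Hseg, Hu.
- unfold H in Hc; lra.
Qed.

Section Quadratic.

Variables al be ga : R.

Local Notation P := (Pquad al be ga).
Local Notation ell := (ellP al be ga).

Definition Bquad (z v : R) : R := al + be * (z + v) / 2 + ga * z * v.

Lemma Bquad_diag (z : R) : Bquad z z = P z.
Proof. unfold Bquad, Pquad; field. Qed.

Lemma Bquad_sqr_sub (z v : R) :
  Bquad z v ^ 2 - P z * P v = discP al be ga * (z - v) ^ 2 / 4.
Proof. unfold Bquad, Pquad, discP; field. Qed.

Lemma Bquad_wmean_l (p q z v y : R) :
  p + q <> 0 -> Bquad (wmean p q z v) y = wmean p q (Bquad z y) (Bquad v y).
Proof. intros Hpq; unfold Bquad, wmean; field; exact Hpq. Qed.

Lemma Pquad_wmean (p q z v : R) :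
  p + q <> 0 ->
  P (wmean p q z v) * (p + q) ^ 2 = p ^ 2 * P z + q ^ 2 * P v + 2 * p * q * Bquad z v.
Proof. intros Hpq; unfold Bquad, Pquad, wmean; field; exact Hpq. Qed.

Lemma ell_sqr (z : R) : 0 < P z -> ell z ^ 2 * P z = 1.
Proof.
intros Hz; unfold ellP.
assert (0 < sqrt (P z)) by (apply sqrt_lt_R0; exact Hz).
rewrite <- (sqrt_sqrt (P z)) at 2 by lra.
field; lra.
Qed.

Lemma ell_pos (z : R) : 0 < P z -> 0 < ell z.
Proof. intros Hz; apply Rinv_0_lt_compat, sqrt_lt_R0, Hz. Qed.

Lemma is_derive_wmean_ell (t c v z : R) :
  0 < P z -> 0 < t -> 0 <= c ->
  is_derive (fun w => wmean (t * ell w) c w v) z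
    (t * (t + c * ell z * Bquad z v) / (P z * (t * ell z + c) ^ 2)).
Proof.
intros Hz Ht Hc.
assert (Hden : 0 < t * ell z + c) by (assert (Hl := ell_pos z Hz); nra).
assert (Hs : 0 < sqrt (P z)) by (apply sqrt_lt_R0; exact Hz).
assert (Hss : sqrt (P z) * sqrt (P z) = P z) by (apply sqrt_sqrt; lra).
unfold wmean, ellP, Pquad, Bquad in *.
auto_derive; change (z * (z * 1)) with (z ^ 2).
- repeat split; lra.
- set (s := sqrt (al + be * z + ga * z ^ 2)) in *.
  replace al with (s * s - be * z - ga * z ^ 2) by lra.
  field; repeat split; nra.
Qed.

Lemma Pquad_wmean_ell (t z v : R) :
  0 <= t <= 1 -> 0 < P z -> 0 < P v ->
  (t - 1 / 2) * (1 - ell z * ell v * Bquad z v) = 0 ->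
  P (wmean (t * ell z) ((1 - t) * ell v) z v) * (t * ell z + (1 - t) * ell v) ^ 2
  = t + (1 - t) * ell v * ell z * Bquad z v.
Proof.
intros Ht Hz Hv Hcond.
assert (Hlz := ell_sqr z Hz); assert (Hlv := ell_sqr v Hv).
assert (Hpz := ell_pos z Hz); assert (Hpv := ell_pos v Hv).
rewrite Pquad_wmean by nra.
transitivity (t + (1 - t) * ell v * ell z * Bquad z v
  + t ^ 2 * (ell z ^ 2 * P z - 1) + (1 - t) ^ 2 * (ell v ^ 2 * P v - 1)
  - 2 * (1 - t) * ((t - 1 / 2) * (1 - ell z * ell v * Bquad z v))); [field|].
rewrite Hlz, Hlv, Hcond; ring.
Qed.

Section PositiveOnInterval.

Variables a b : Rbar.
Hypothesis HP : forall u, in_open_int a b u -> 0 < P u.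

Lemma Bquad_pos (z v : R) :
  discP al be ga = 0 -> in_open_int a b z -> in_open_int a b v -> 0 < Bquad z v.
Proof.
intros HD Hz Hv.
assert (Hsqr : forall w, Bquad w v ^ 2 = P w * P v).
{ intros w; assert (E := Bquad_sqr_sub w v); rewrite HD in E; lra. }
assert (Pv := HP v Hv).
destruct (Rlt_le_dec 0 (Bquad z v)) as [Hpos | Hneg]; [exact Hpos | exfalso].
(* the zero of the affine map [Bquad _ v] between [z] and [v] *)
set (w := wmean (P v) (- Bquad z v) z v).
assert (Hw : in_open_int a b w) by (apply in_open_int_wmean; auto; lra).
assert (Hw0 : Bquad w v = 0).
{ unfold w; rewrite Bquad_wmean_l, Bquad_diag by lra.
  unfold wmean; field; lra. }
assert (Pw := HP w Hw).
specialize (Hsqr w); rewrite Hw0 in Hsqr; nra.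
Qed.

Lemma ell_mul_Bquad (z v : R) :
  discP al be ga = 0 -> in_open_int a b z -> in_open_int a b v ->
  ell z * ell v * Bquad z v = 1.
Proof.
intros HD Hz Hv.
assert (HB := Bquad_pos z v HD Hz Hv).
assert (Hsqr := Bquad_sqr_sub z v); rewrite HD in Hsqr.
assert (Pz := HP z Hz); assert (Pv := HP v Hv).
assert (Hlz := ell_sqr z Pz); assert (Hlv := ell_sqr v Pv).
assert (Hpz := ell_pos z Pz); assert (Hpv := ell_pos v Pv).
set (X := ell z * ell v * Bquad z v).
assert (HX : 0 < X) by (unfold X; apply Rmult_lt_0_compat; [nra | exact HB]).
assert (HX2 : X ^ 2 = 1).
{ transitivity (ell z ^ 2 * ell v ^ 2 * Bquad z v ^ 2); [unfold X; ring |].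
  replace (Bquad z v ^ 2) with (P z * P v) by lra.
  transitivity ((ell z ^ 2 * P z) * (ell v ^ 2 * P v)); [ring |].
  rewrite Hlz, Hlv; ring. }
nra.
Qed.

Variable psi : R -> R.
Hypothesis Hpsi : forall u, in_open_int a b u -> is_derive psi u (/ P u).

Lemma is_derive_primitive_wmean_ell (t z v : R) :
  0 < t < 1 -> in_open_int a b z -> in_open_int a b v ->
  (t - 1 / 2) * (1 - ell z * ell v * Bquad z v) = 0 ->
  is_derive (fun w => psi (wmean (t * ell w) ((1 - t) * ell v) w v)) z (t * / P z).
Proof.
intros Ht Hz Hv Hcond.
assert (Pz := HP z Hz); assert (Pv := HP v Hv).
assert (Hpz := ell_pos z Pz); assert (Hpv := ell_pos v Pv).
assert (HM : in_open_int a b (wmean (t * ell z) ((1 - t) * ell v) z v))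
  by (apply in_open_int_wmean; auto; nra).
assert (PM := HP _ HM).
assert (HPM := Pquad_wmean_ell t z v ltac:(lra) Pz Pv Hcond).
evar (d : R).
replace (t * / P z) with d.
- apply (is_derive_comp psi (fun w => wmean (t * ell w) ((1 - t) * ell v) w v)).
  + exact (Hpsi _ HM).
  + apply is_derive_wmean_ell; auto; nra.
- subst d; unfold scal; simpl; unfold mult; simpl.
  rewrite <- HPM; field; repeat split; nra.
Qed.

End PositiveOnInterval.

End Quadratic.

Theorem lemma2p4 (a b : Rbar) (al be ga t : R) (psi phi : R -> R) :
  Rbar_lt a b ->
  (forall u, in_open_int a b u -> 0 < Pquad al be ga u) ->
  0 < t < 1 ->
  (t - 1 / 2) * discP al be ga = 0 ->
  (* psi is a primitive of 1/P on I *)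
  (forall u, in_open_int a b u -> is_derive psi u (/ Pquad al be ga u)) ->
  (* phi is the inverse of psi : I -> psi(I) *)
  (forall u, in_open_int a b u -> phi (psi u) = u) ->
  forall x y : R,
    (exists u, in_open_int a b u /\ psi u = x) ->
    (exists v, in_open_int a b v /\ psi v = y) ->
    let f := fun z => ellP al be ga (phi z) in
    (t * f x + (1 - t) * f y) * phi (t * x + (1 - t) * y)
    = t * f x * phi x + (1 - t) * f y * phi y.
Proof.
intros _ HP Ht HD Hpsi Hphi x y [u [Hu <-]] [v [Hv <-]] f; unfold f.
rewrite !Hphi by assumption.
set (ell := ellP al be ga).
set (M := fun w => wmean (t * ell w) ((1 - t) * ell v) w v).
assert (Hpu : 0 < ell u) by exact (ell_pos al be ga u (HP u Hu)).
assert (Hpv : 0 < ell v) by exact (ell_pos al be ga v (HP v Hv)).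
assert (Hcond : forall w, in_open_int a b w ->
  (t - 1 / 2) * (1 - ell w * ell v * Bquad al be ga w v) = 0).
{ intros w Hw; destruct (Rmult_integral _ _ HD) as [Ht2 | HD0].
  - rewrite Ht2; ring.
  - unfold ell; rewrite (ell_mul_Bquad al be ga a b HP w v HD0 Hw Hv); ring. }
assert (Hmean : psi (M u) = t * psi u + (1 - t) * psi v).
{ assert (HMv : M v = v) by (unfold M, wmean; field; nra).
  assert (E := primitive_unique a b (fun w => psi (M w)) (fun w => t * psi w)
    (fun w => t * / Pquad al be ga w) u v
    (fun w Hw => is_derive_primitive_wmean_ell al be ga a b HP psi Hpsi t w v Ht Hw Hv (Hcond w Hw))
    (fun w Hw => is_derive_scal psi w t _ (Hpsi w Hw)) Hu Hv).
  simpl in E; rewrite HMv in E; lra. }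
rewrite <- Hmean, Hphi by (apply in_open_int_wmean; auto; nra).
unfold M, wmean; field; repeat split; nra.
Qed.
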